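(* Let $c\ge 2$ be the number of colors. Suppose a board with $m$ rows and $n$ columns has a perfect layout, and let $p$ and $q$ be respectively the number of rows and the number of columns that contain at least one sink. Then $$c(m+n)+(c-2)(p+q)\le mn-c.$$
   Context: A board is an $m\times n$ grid of unit cells in which exactly $c$ cells are sinks, one of each of $c$ colors, and all other cells are empty. A layout places, in some of the empty cells, arrows, each having one of the $c$ colors and one of the four cardinal directions. A packet of color $i$ may enter the grid through any unit edge of the outer boundary of the grid, into the adjacent cell, moving perpendicular to that edge into the grid; it moves one cell at a time in its current direction, and whenever it enters a cell containing an arrow of color $i$ its direction becomes that arrow's direction (arrows of other colors are ignored). The packet succeeds if it enters the sink of color $i$; it fails if it enters a sink of another color, leaves the grid, or travels forever without reaching a sink. A perfect layout is a layout in which every packet of every color entering through every boundary edge succeeds. *)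

From mathcomp Require Import all_boot.
Set Implicit Arguments. Unset Strict Implicit. Unset Printing Implicit Defensive.

(* Cardinal directions; rows are numbered top to bottom (North = decreasing
   row index), columns left to right (East = increasing column index). *)
Inductive dir := North | South | East | West.

Section Board.
Variables (c m n : nat).

Definition cell := ('I_m * 'I_n)%type.

Definition next_cell (x : cell) (d : dir) : option cell :=
  match d with
  | North => if val x.1 is i.+1 then omap (fun a : 'I_m => (a, x.2)) (insub i) else None
  | South => omap (fun a : 'I_m => (a, x.2)) (insub (val x.1).+1)
  | West  => if val x.2 is j.+1 then omap (fun b : 'I_n => (x.1, b)) (insub j) else None
  | East  => omap (fun b : 'I_n => (x.1, b)) (insub (val x.2).+1)
  end.

Definition layout := cell -> option ('I_c * dir).

Definition valid_layout (sink : 'I_c -> cell) (L : layout) : Prop :=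
  forall x, L x <> None -> forall k, x <> sink k.

Definition upd (L : layout) (col : 'I_c) (y : cell) (d : dir) : dir :=
  match L y with
  | Some (k, a) => if k == col then a else d
  | None => d
  end.

(* traj L col x0 d0 t = Some (cell, direction) of the packet after its t-th
   move (t = 0: having just entered x0 with direction d0), or None if it has
   left the grid. *)
Fixpoint traj (L : layout) (col : 'I_c) (x0 : cell) (d0 : dir) (t : nat)
  : option (cell * dir) :=
  match t with
  | 0 => Some (x0, upd L col x0 d0)
  | t'.+1 =>
    match traj L col x0 d0 t' with
    | None => None
    | Some (x, d) => omap (fun y => (y, upd L col y d)) (next_cell x d)
    end
  end.

(* (x, d) is an entry through a boundary edge: x is adjacent to that edge and
   d is perpendicular to it, pointing into the grid. *)
Definition entry (x : cell) (d : dir) : Prop :=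
  match d with
  | South => val x.1 = 0
  | North => val x.1 = m.-1
  | East  => val x.2 = 0
  | West  => val x.2 = n.-1
  end.

(* The packet succeeds: it enters the sink of its colour at some time t,
   never having entered a sink of another colour before (nor left the grid,
   which is implied by the trajectory being defined at time t). *)
Definition succeeds (sink : 'I_c -> cell) (L : layout) (col : 'I_c)
    (x0 : cell) (d0 : dir) : Prop :=
  exists t, (exists d, traj L col x0 d0 t = Some (sink col, d)) /\
    forall s, s < t -> forall y d k, traj L col x0 d0 s = Some (y, d) ->
      y = sink k -> k = col.

Definition perfect (sink : 'I_c -> cell) (L : layout) : Prop :=
  valid_layout sink L /\
  forall (col : 'I_c) (x : cell) (d : dir), entry x d -> succeeds sink L col x d.

Definition sink_rows (sink : 'I_c -> cell) : nat :=
  #|[set i : 'I_m | [exists k, (sink k).1 == i]]|.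
Definition sink_cols (sink : 'I_c -> cell) : nat :=
  #|[set j : 'I_n | [exists k, (sink k).2 == j]]|.

End Board.

(* Call an arrow of colour i "crossing" a line (row or column) if it points
   along the other axis.  Fix a line and a colour i, and follow a packet of
   colour i entering at one end of the line.  It moves straight until the
   first cell holding a sink or an arrow of colour i that turns it.  If that
   cell is a sink, it is sink i; an arrow pointing back traps the packet on
   the segment before it, which contains no sink; so otherwise the cell holds
   a crossing arrow of colour i lying before every sink of the line.
   Entering from both ends, every colour gets a crossing arrow on each side
   of any sink of the line, except the (at most one) colour whose sink is the
   first seen from that end: a line carries at least c crossing arrows, and
   2c - 2 when it contains a sink.  Every non-sink cell holds at most one
   arrow, crossing either its row or its column, so summing over all rows and
   columns gives c(m + n) + (c - 2)(p + q) <= mn - c. *)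

From HB Require Import structures.
From mathcomp Require Import all_boot zify.

Set Implicit Arguments. Unset Strict Implicit. Unset Printing Implicit Defensive.

Definition dir_eqb (a b : dir) : bool :=
  match a, b with
  | North, North | South, South | East, East | West, West => true
  | _, _ => false
  end.

Lemma dir_eqP : Equality.axiom dir_eqb.
Proof. by case; case; constructor. Qed.

HB.instance Definition _ := hasDecEq.Build dir dir_eqP.

Definition opp (d : dir) : dir :=
  match d with North => South | South => North | East => West | West => East end.

Definition horizontal (d : dir) : bool :=
  match d with East | West => true | North | South => false end.

Lemma oppK : involutive opp. Proof. by case. Qed.

Lemma horizontal_opp d : horizontal (opp d) = horizontal d. Proof. by case: d. Qed.

Lemma across_axis d a : a != d -> a != opp d -> horizontal a != horizontal d.
Proof. by case: d; case: a. Qed.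

Lemma traj_left c m n (L : layout c m n) i x d t t' :
  t <= t' -> traj L i x d t = None -> traj L i x d t' = None.
Proof.
move=> /subnK <-; elim: (t' - t) => // s IH Ht.
by rewrite addSn /= IH.
Qed.

Section Lines.
Variables (c m n : nat) (sink : 'I_c -> cell m n) (L : layout c m n).

Definition is_sink (x : cell m n) : bool := [exists k, x == sink k].

Lemma is_sink_sink k : is_sink (sink k).
Proof. by apply/existsP; exists k. Qed.

(* x holds an arrow of colour i whose direction is not on the axis given by
   h (h = true: the arrow is vertical, so it crosses the row of x). *)
Definition crossing (h : bool) (i : 'I_c) (x : cell m n) : bool :=
  if L x is Some (k, d) then (k == i) && (horizontal d != h) else false.

Definition is_line (N : nat) (pos : nat -> cell m n) (fw : dir) : Prop :=
  forall k, k < N ->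
    next_cell (pos k) fw = (if k.+1 < N then Some (pos k.+1) else None) /\
    next_cell (pos k) (opp fw) = (if k is k'.+1 then Some (pos k') else None).

Lemma is_line_rev N pos fw :
  is_line N pos fw -> is_line N (fun k => pos (N.-1 - k)) (opp fw).
Proof.
move=> Hline k Hk; have [Hfw Hbw] := Hline (N.-1 - k) ltac:(lia).
rewrite oppK; split.
- rewrite Hbw; case: ifP => Hk1.
  + by have -> : N.-1 - k = (N.-1 - k.+1).+1 by lia.
  + by have -> : N.-1 - k = 0 by lia.
- rewrite Hfw; case: k Hk {Hfw Hbw} => [|k] Hk.
  + by rewrite subn0 ifF //; lia.
  + rewrite ifT; last by lia.
    by congr (Some (pos _)); lia.
Qed.

Definition resolved (A : cell m n -> bool) (N : nat) (q : nat -> cell m n)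
    (i : 'I_c) : Prop :=
  exists2 j, j < N & (forall j', j' < j -> ~~ is_sink (q j')) /\
    (q j = sink i \/ ~~ is_sink (q j) && A (q j)).

End Lines.

Section Walk.
Variables (c m n : nat) (sink : 'I_c -> cell m n) (L : layout c m n) (i : 'I_c).
Variables (N : nat) (pos : nat -> cell m n) (fw : dir).
Hypothesis line_pos : is_line N pos fw.

Local Notation is_sink := (is_sink sink).
Local Notation traj_from := (traj L i (pos 0) fw).

Definition stops (j : nat) : bool :=
  is_sink (pos j) || (upd L i (pos j) fw != fw).

Lemma unstopped_upd j : ~~ stops j -> upd L i (pos j) fw = fw.
Proof. by rewrite negb_or negbK => /andP[_ /eqP]. Qed.

Lemma unstopped_free j : ~~ stops j -> ~~ is_sink (pos j).
Proof. by rewrite negb_or => /andP[]. Qed.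

Lemma traj_straight k : k < N -> (forall j, j < k -> ~~ stops j) ->
  traj_from k = Some (pos k, upd L i (pos k) fw).
Proof.
elim: k => [//|k IH] HkN Hfree.
rewrite /= IH; [|lia|by move=> j Hj; apply: Hfree; lia].
rewrite unstopped_upd ?Hfree // (line_pos (ltnW HkN)).1.
by rewrite HkN.
Qed.

Lemma straight_exit : 0 < N -> (forall j, j < N -> ~~ stops j) ->
  ~ succeeds sink L i (pos 0) fw.
Proof.
move=> HN Hfree [t [[d Ht] _]].
have Hlast : N.-1 < N by lia.
have Hout : traj_from N = None.
  have -> : N = N.-1.+1 by lia.
  rewrite /= traj_straight // => [|j Hj]; last by apply: Hfree; lia.
  rewrite unstopped_upd ?Hfree // (line_pos Hlast).1.
  by rewrite ifF //; lia.
case: (ltnP t N) => [HtN|HNt]; last by rewrite (traj_left HNt Hout) in Ht.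
move: Ht; rewrite traj_straight // => [[Hpos _]|j Hj]; last by apply: Hfree; lia.
by move: (unstopped_free (Hfree t HtN)); rewrite Hpos is_sink_sink.
Qed.

Section Trapped.
Variable j : nat.
Hypotheses (HjN : j < N) (Hfirst : forall j', j' < j -> ~~ stops j').
Hypothesis Hback : upd L i (pos j) fw = opp fw.

(* An arrow of colour i pointing back at the first stop traps the packet:
   going forward it stays before pos j, going back it stays at or before it
   (forward arrows met on the way back send it forward again). *)
Lemma trapped_invariant s : traj_from s = None \/ exists k d,
  traj_from s = Some (pos k, d) /\ (d = fw /\ k < j \/ d = opp fw /\ k <= j).
Proof.
have Hturn k : k <= j -> upd L i (pos k) fw = fw /\ k < j \/
    upd L i (pos k) fw = opp fw /\ k <= j.
  move=> Hkj; case: (ltnP k j) => Hk; first by left; rewrite unstopped_upd ?Hfirst.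
  by right; have -> : k = j by lia.
elim: s => [|s [IH|[k [d [IH Hkd]]]]].
- by right; exists 0, (upd L i (pos 0) fw); split => //; apply: Hturn.
- by left; rewrite /= IH.
- rewrite /= IH; case: Hkd => [[-> Hkj]|[-> Hkj]].
  + rewrite (line_pos (ltn_trans Hkj HjN)).1 ifT /=; last by lia.
    by right; exists k.+1, (upd L i (pos k.+1) fw); split => //; apply: Hturn.
  + rewrite (line_pos (leq_ltn_trans Hkj HjN)).2.
    case: k Hkj {IH} => [|k] Hkj; [by left | right].
    exists k, (upd L i (pos k) (opp fw)); split => //.
    have := unstopped_upd (Hfirst Hkj); rewrite /upd.
    case: (L (pos k)) => [[k' a]|] Hup; last by right; split => //; lia.
    by case: eqP Hup => _ Hup; [left | right]; split => //; lia.
Qed.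

Lemma trapped : ~~ is_sink (pos j) -> ~ succeeds sink L i (pos 0) fw.
Proof.
move=> Hj [t [[d Ht] _]].
case: (trapped_invariant t) => [|[k [d' [Hk Hkd]]]]; first by rewrite Ht.
move: Ht; rewrite Hk => -[Hpos _].
have Hfree : ~~ is_sink (pos k).
  case: (ltnP k j) => [/Hfirst/unstopped_free //|Hjk].
  by have -> : k = j by case: Hkd => -[_]; lia.
by rewrite Hpos is_sink_sink in Hfree.
Qed.

End Trapped.

Lemma first_stop_sink j : j < N -> (forall j', j' < j -> ~~ stops j') ->
  is_sink (pos j) -> succeeds sink L i (pos 0) fw -> pos j = sink i.
Proof.
move=> HjN Hfirst /existsP[k /eqP Hk] [t [[d Ht] Hbefore]].
have Hj := traj_straight HjN Hfirst.
case: (ltngtP t j) => [Htj|Hjt|Etj].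
- move: Ht; rewrite traj_straight => [[Hpos _]||j' Hj']; [|lia|apply: Hfirst; lia].
  by move: (unstopped_free (Hfirst t Htj)); rewrite Hpos is_sink_sink.
- by rewrite Hk (Hbefore j Hjt _ _ _ Hj Hk).
- by move: Ht; rewrite Etj Hj => -[].
Qed.

Lemma resolved_walk : 0 < N -> succeeds sink L i (pos 0) fw ->
  resolved sink (crossing L (horizontal fw) i) N pos i.
Proof.
move=> HN Hsucc.
have [Hstop | Hnostop] := boolP [exists j : 'I_N, stops j]; last first.
  by case: (straight_exit HN) => // j Hj; apply: (existsPn Hnostop (Ordinal Hj)).
have /ex_minnP[j /andP[HjN Hj] Hmin] : exists j, (j < N) && stops j.
  by case/existsP: Hstop => j Hj; exists j; rewrite ltn_ord.
have Hfirst j' : j' < j -> ~~ stops j'.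
  move=> Hj'; apply/negP => Hs; have := Hmin j'; rewrite Hs andbT; lia.
exists j => //; split => [j' /Hfirst/unstopped_free //|].
have [Hsink | Hfree] := boolP (is_sink (pos j)).
  by left; apply: first_stop_sink.
right => /=; move: Hj; rewrite /stops (negbTE Hfree) /=.
have Hnot_back : upd L i (pos j) fw != opp fw.
  by apply/eqP => Hback; exact: trapped Hback Hfree Hsucc.
move: Hnot_back; rewrite /upd /crossing.
case: (L (pos j)) => [[k a]|]; last by rewrite eqxx.
have [_ | _] := eqVneq k i; last by rewrite eqxx.
by move=> Hab Haf; apply: across_axis.
Qed.

End Walk.

Lemma card_set_sum (T : finType) (P : pred T) :
  #|[set x | P x]| = \sum_x (P x : nat).
Proof. by rewrite -sum1dep_card big_mkcond; apply: eq_bigr => x _; case: (P x). Qed.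

Lemma sum_bool_le1 (T : finType) (P : pred T) :
  (forall x y, P x -> P y -> x = y) -> \sum_x (P x : nat) <= 1.
Proof.
move=> HP; rewrite -card_set_sum; apply/card_le1_eqP => x y.
by rewrite !inE => Hx Hy; symmetry; apply: HP.
Qed.

Lemma sum_bool_ge1 N (P : pred 'I_N) a : P a -> 1 <= \sum_j (P j : nat).
Proof. by move=> Ha; rewrite (bigD1 a) //= Ha. Qed.

Lemma sum_bool_ge2 N (P : pred 'I_N) a b :
  a != b -> P a -> P b -> 2 <= \sum_j (P j : nat).
Proof.
move=> Hab Ha Hb; rewrite (bigD1 a) //= (bigD1 b) 1?eq_sym //= Ha Hb.
by rewrite addnA leq_addr.
Qed.

Section Count.
Variables (c m n : nat) (sink : 'I_c -> cell m n) (hsink : injective sink).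
Variables (A : 'I_c -> cell m n -> bool) (N : nat) (pos : nat -> cell m n).

Local Notation is_sink := (is_sink sink).
Local Notation rev_pos := (fun k => pos (N.-1 - k)).

Definition first_sink (q : nat -> cell m n) (i : 'I_c) : bool :=
  [exists j : 'I_N, (q j == sink i) &&
     [forall j' : 'I_N, (j' < j) ==> ~~ is_sink (q j')]].

Lemma first_sink_uniq q i1 i2 : first_sink q i1 -> first_sink q i2 -> i1 = i2.
Proof.
move=> /existsP[j1 /andP[/eqP H1 /forallP F1]].
move=> /existsP[j2 /andP[/eqP H2 /forallP F2]].
suff E : j1 = j2 by apply: hsink; rewrite -H1 -H2 E.
apply: val_inj; case: (ltngtP j1 j2) => // Hlt.
- by have := F2 j1; rewrite Hlt H1 is_sink_sink.
- by have := F1 j2; rewrite Hlt H2 is_sink_sink.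
Qed.

Lemma resolved_first_sink q i j : j < N -> (forall j', j' < j -> ~~ is_sink (q j')) ->
  q j = sink i -> first_sink q i.
Proof.
move=> Hj Hbefore Hq; apply/existsP; exists (Ordinal Hj); rewrite /= Hq eqxx.
by apply/forallP => j'; apply/implyP; apply: Hbefore.
Qed.

Hypothesis fw_resolved : forall i, resolved sink (A i) N pos i.

Local Notation count i := (\sum_(j < N) A i (pos j)).

Lemma count_nosink : (forall j, j < N -> ~~ is_sink (pos j)) ->
  c <= \sum_(i < c) count i.
Proof.
move=> Hfree; rewrite -{1}[c]card_ord -sum1_card leq_sum // => i _.
have [j Hj [_ [Hsink | /andP[_ HA]]]] := fw_resolved i.
- by move: (Hfree j Hj); rewrite Hsink is_sink_sink.
- exact: (@sum_bool_ge1 N (fun j => A i (pos j)) (Ordinal Hj)).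
Qed.

Hypothesis bw_resolved : forall i, resolved sink (A i) N rev_pos i.
Variable a : nat.
Hypotheses (HaN : a < N) (Ha : is_sink (pos a)).

(* On a line with a sink at pos a, colour i gets a crossing cell from each
   end except when its sink is the first seen from that end; the two
   crossing cells lie on opposite sides of pos a, hence are distinct. *)
Lemma colour_bound i : 2 <= count i + first_sink pos i + first_sink rev_pos i.
Proof.
have [j1 Hj1 [Hb1 C1]] := fw_resolved i; have [j2 Hj2 [Hb2 C2]] := bw_resolved i.
have Hj2' : N.-1 - j2 < N by lia.
have Hbefore : ~~ is_sink (pos j1) -> j1 < a.
  move=> Hn; case: (ltngtP j1 a) => // H.
  - by move: (Hb1 a H); rewrite Ha.
  - by move: Hn; rewrite H Ha.
have Hafter : ~~ is_sink (pos (N.-1 - j2)) -> a < N.-1 - j2.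
  move=> Hn; case: (ltngtP a (N.-1 - j2)) => // H.
  - by move: (Hb2 (N.-1 - a)); rewrite subKn ?Ha //; lia.
  - by move: Hn; rewrite -H Ha.
case: C1 => [/(resolved_first_sink Hj1 Hb1) -> | /andP[Hn1 A1]];
  case: C2 => [/(resolved_first_sink Hj2 Hb2) -> | /andP[Hn2 A2]] /=.
- by rewrite !addn1.
- by have /= := @sum_bool_ge1 N (fun j => A i (pos j)) (Ordinal Hj2') A2; lia.
- by have /= := @sum_bool_ge1 N (fun j => A i (pos j)) (Ordinal Hj1) A1; lia.
- have Hne : Ordinal Hj1 != Ordinal Hj2'.
    by apply/eqP => -[]; have := Hbefore Hn1; have := Hafter Hn2; lia.
  by have /= := @sum_bool_ge2 N (fun j => A i (pos j)) _ _ Hne A1 A2; lia.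
Qed.

(* Summing over colours: at most one colour is first seen from each end. *)
Lemma count_sink : 2 * c <= \sum_(i < c) count i + 2.
Proof.
have Hfw : \sum_(i < c) first_sink pos i <= 1 by apply/sum_bool_le1/first_sink_uniq.
have Hbw : \sum_(i < c) first_sink rev_pos i <= 1 by apply/sum_bool_le1/first_sink_uniq.
have : \sum_(i < c) 2 <= \sum_(i < c) (count i + first_sink pos i + first_sink rev_pos i).
  by apply: leq_sum => i _; apply: colour_bound.
rewrite !big_split /= sum_nat_const card_ord mulnC => Hsum.
by apply: leq_trans Hsum _; rewrite -addnA leq_add2l (leq_add Hfw Hbw).
Qed.

End Count.

Lemma insub_inord p k : k < p.+1 -> insub k = Some (inord k : 'I_p.+1).
Proof.
move=> Hk; case: insubP => [u _ Hu|]; last by rewrite Hk.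
by congr Some; apply: val_inj; rewrite /= Hu inordK.
Qed.

Lemma insub_none p k : p.+1 <= k -> insub k = None :> option 'I_p.+1.
Proof. by move=> Hk; rewrite insubF // ltnNge Hk. Qed.

Lemma row_line m n (r : 'I_m) : is_line n.+1 (fun k => (r, @inord n k)) East.
Proof.
move=> k Hk /=; rewrite inordK //; split.
- by case: ifP => H; [rewrite insub_inord | rewrite insub_none //; lia].
- by case: k Hk => [|k] Hk //=; rewrite insub_inord //; lia.
Qed.

Lemma col_line m n (s : 'I_n) : is_line m.+1 (fun k => (@inord m k, s)) South.
Proof.
move=> k Hk /=; rewrite inordK //; split.
- by case: ifP => H; [rewrite insub_inord | rewrite insub_none //; lia].
- by case: k Hk => [|k] Hk //=; rewrite insub_inord //; lia.
Qed.

Section Perfect.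
Variables (c m n : nat) (sink : 'I_c -> cell m n) (L : layout c m n).

Local Notation is_sink := (is_sink sink).

Lemma line_bound N pos fw : 2 <= c -> injective sink -> perfect sink L ->
    0 < N -> is_line N pos fw ->
    entry (pos 0) fw -> entry (pos N.-1) (opp fw) ->
  c + (c - 2) * [exists j : 'I_N, is_sink (pos j)] <=
    \sum_(i < c) \sum_(j < N) crossing L (horizontal fw) i (pos j).
Proof.
move=> hc hsink hperf HN Hline Hin Hout.
have Hfw i := resolved_walk Hline HN (hperf.2 i _ _ Hin).
have Hbw i : resolved sink (crossing L (horizontal fw) i) N (fun k => pos (N.-1 - k)) i.
  rewrite -horizontal_opp; apply: resolved_walk (is_line_rev Hline) HN _.
  by apply: hperf.2; rewrite subn0.
have [/existsP[a Ha] | Hfree] := boolP [exists j : 'I_N, is_sink (pos j)].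
- have := count_sink hsink Hfw Hbw (ltn_ord a) Ha; lia.
- rewrite muln0 addn0; apply: (count_nosink Hfw) => j Hj.
  by move/existsPn: Hfree => /(_ (Ordinal Hj)).
Qed.

Lemma cell_bound x : perfect sink L ->
  \sum_(i < c) (crossing L true i x + crossing L false i x) <= ~~ is_sink x.
Proof.
move=> hperf; rewrite /crossing; case EL: (L x) => [[k d]|]; last by rewrite big1.
have Hx : ~~ is_sink x.
  by apply/existsP => -[k' /eqP Hk']; apply: (hperf.1 x _ k' Hk'); rewrite EL.
rewrite Hx (bigD1 k) //= big1 => [|i Hik]; last by rewrite eq_sym (negbTE Hik).
by rewrite eqxx; case: (horizontal d).
Qed.

Lemma card_free_cells : injective sink ->
  \sum_(x : 'I_m * 'I_n) (~~ is_sink x : nat) = m * n - c.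
Proof.
move=> hsink; rewrite -card_set_sum.
have -> : [set x | ~~ is_sink x] = ~: [set sink k | k in 'I_c].
  apply/setP => x; rewrite !inE; congr (~~ _).
  by apply/existsP/imsetP => -[k]; [move/eqP ->| move=> _ ->]; exists k.
have := cardsC [set sink k | k in 'I_c].
by rewrite card_imset // card_prod !card_ord; lia.
Qed.

End Perfect.

Lemma sum_rows_cols (T U I : finType) (F G : I -> T * U -> nat) :
  \sum_(r : T) \sum_(i : I) \sum_(s : U) F i (r, s) +
  \sum_(s : U) \sum_(i : I) \sum_(r : T) G i (r, s) =
  \sum_(x : T * U) \sum_(i : I) (F i x + G i x).
Proof.
rewrite [RHS](eq_bigr (fun x => \sum_i F i x + \sum_i G i x)) => [|x _].
  rewrite big_split /=; congr (_ + _).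
  - under eq_bigr do rewrite exchange_big.
    by rewrite pair_bigA; apply: eq_bigr => -[].
  - under eq_bigr do rewrite exchange_big.
    by rewrite exchange_big pair_bigA; apply: eq_bigr => -[].
by rewrite big_split.
Qed.

Lemma sum_indicator (T : finType) (P : pred T) a b :
  \sum_(x : T) (a + b * P x) = #|T| * a + b * #|[set x | P x]|.
Proof. by rewrite big_split sum_nat_const -big_distrr card_set_sum. Qed.

Section PositiveBoard.
Variables (c m n : nat) (sink : 'I_c -> cell m.+1 n.+1) (L : layout c m.+1 n.+1).
Hypotheses (hc : 2 <= c) (hsink : injective sink) (hperf : perfect sink L).

Local Notation is_sink := (is_sink sink).

Lemma row_bound (r : 'I_m.+1) :
  c + (c - 2) * [exists k, (sink k).1 == r] <=
    \sum_(i < c) \sum_(s < n.+1) crossing L true i (r, s).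
Proof.
have Hin : entry (r, @inord n 0) East by rewrite /entry /= inordK.
have Hout : entry (r, @inord n n.+1.-1) West by rewrite /entry /= inordK.
have := line_bound hc hsink hperf (ltn0Sn n) (row_line r) Hin Hout.
have -> : [exists j : 'I_n.+1, is_sink (r, inord j)] = [exists k, (sink k).1 == r].
  apply/existsP/existsP => [[j /existsP[k /eqP Hk]] | [k /eqP Hk]].
  - by exists k; rewrite -Hk.
  - exists (sink k).2; apply/existsP; exists k.
    by rewrite inord_val -Hk -surjective_pairing.
by under eq_bigr do under eq_bigr do rewrite inord_val.
Qed.

Lemma col_bound (s : 'I_n.+1) :
  c + (c - 2) * [exists k, (sink k).2 == s] <=
    \sum_(i < c) \sum_(r < m.+1) crossing L false i (r, s).
Proof.
have Hin : entry (@inord m 0, s) South by rewrite /entry /= inordK.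
have Hout : entry (@inord m m.+1.-1, s) North by rewrite /entry /= inordK.
have := line_bound hc hsink hperf (ltn0Sn m) (col_line s) Hin Hout.
have -> : [exists j : 'I_m.+1, is_sink (inord j, s)] = [exists k, (sink k).2 == s].
  apply/existsP/existsP => [[j /existsP[k /eqP Hk]] | [k /eqP Hk]].
  - by exists k; rewrite -Hk.
  - exists (sink k).1; apply/existsP; exists k.
    by rewrite inord_val -Hk -surjective_pairing.
by under eq_bigr do under eq_bigr do rewrite inord_val.
Qed.

Lemma perfect_bound :
  c * (m.+1 + n.+1) + (c - 2) * (sink_rows sink + sink_cols sink) <=
    m.+1 * n.+1 - c.
Proof.
have Hrows := leq_sum (index_enum _) (fun r (_ : true) => row_bound r).
have Hcols := leq_sum (index_enum _) (fun s (_ : true) => col_bound s).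
rewrite !sum_indicator !card_ord in Hrows Hcols.
have Hcells := leq_sum (index_enum _) (fun x (_ : true) => cell_bound x hperf).
have Hsplit := sum_rows_cols (fun i x => crossing L true i x)
  (fun i x => crossing L false i x).
rewrite card_free_cells // -Hsplit in Hcells.
have := leq_trans (leq_add Hrows Hcols) Hcells.
by rewrite /sink_rows /sink_cols !mulnDr ![c * _]mulnC addnACA.
Qed.

End PositiveBoard.

(* A board with a sink has at least one row and one column. *)
Theorem mainTheorem11 (c m n : nat) (hc : 2 <= c)
    (sink : 'I_c -> cell m n) (hsink : injective sink)
    (L : layout c m n) (hperf : perfect sink L) :
  c * (m + n) + (c - 2) * (sink_rows sink + sink_cols sink) <= m * n - c.
Proof.
have [r s] := sink (Ordinal hc).
case: m r sink hsink L hperf => [[] //|m] r.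
case: n s => [[] //|n] s sink hsink L hperf.
exact: perfect_bound hc hsink hperf.
Qed.
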